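(* Let $(P_n)_{n\ge 0}$ be the sequence of polynomials in one variable $m$ defined by $P_0(m)=m$ and, for $n\ge 0$, \[P_{n+1}(m)=P_n(m+1)+\sum_{i=0}^{n}P_i(m)\,P_{n-i}(m).\] Then for every $n\ge 0$ the degree of $P_n$ is equal to $n+1$.
   Context: The polynomials $P_n$ have integer coefficients; $P_n(0)$ equals the number of closed lambda terms of size $n$ (de Bruijn indices having size $0$, abstractions and applications size $1$), though this interpretation is not needed for the claim. *)

From mathcomp Require Import all_boot all_algebra.
Set Implicit Arguments. Unset Strict Implicit. Unset Printing Implicit Defensive.
Import GRing.Theory.
Local Open Scope ring_scope.

(* Ptab n = [:: P_0; P_1; ...; P_n], polynomials over int in the variable m. *)
Fixpoint Ptab (n : nat) : seq {poly int} :=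
  match n with
  | 0 => [:: 'X]
  | k.+1 =>
      let s := Ptab k in
      let Pk := nth 0 s k in
      rcons s (Pk \Po ('X + 1) + \sum_(i < k.+1) nth 0 s i * nth 0 s (k - i))
  end.

Definition P (n : nat) : {poly int} := nth 0 (Ptab n) n.

Lemma size_Ptab n : size (Ptab n) = n.+1.
Proof. by elim: n => //= n IH; rewrite size_rcons IH. Qed.

Lemma Ptab_nth n k : (k <= n)%N -> nth 0 (Ptab n) k = P k.
Proof.
elim: n => [|n IH] kn; first by case: k kn.
rewrite /= nth_rcons size_Ptab; case: ltngtP kn => // [kn _|-> _].
  by rewrite IH.
by rewrite /P /= nth_rcons size_Ptab ltnn eqxx.
Qed.

Lemma P0 : P 0 = 'X.
Proof. by []. Qed.

Lemma PS n : P n.+1 = P n \Po ('X + 1) + \sum_(i < n.+1) P i * P (n - i).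
Proof.
rewrite /P /= nth_rcons size_Ptab ltnn eqxx Ptab_nth //.
congr (_ + _); apply: eq_bigr => i _.
by rewrite !Ptab_nth // ?leq_subr // -ltnS.
Qed.

From mathcomp Require Import all_boot all_order all_algebra.
Import Order.TTheory GRing.Theory Num.Theory.
Local Open Scope ring_scope.

(* Induction shows that every [P n] has a positive leading coefficient.  Then
   each product [P i * P (n - i)] has degree [n + 2] and positive leading
   coefficient, so the top coefficients of the convolution sum cannot cancel:
   the sum has degree [n + 2], which beats the degree [n + 1] of the shift
   [P n (m + 1)]. *)

Section PositiveLeadCoef.

Variable R : numDomainType.
Implicit Types p q : {poly R}.

Lemma size_lead_coefD_gt0 p q :
  size p = size q -> 0 < lead_coef p -> 0 < lead_coef q ->
  size (p + q) = size p /\ 0 < lead_coef (p + q).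
Proof.
move=> eq_size lp lq.
have top_coef : (p + q)`_(size p).-1 = lead_coef p + lead_coef q.
  by rewrite coefD !lead_coefE eq_size.
have size_p_gt0 : (0 < size p)%N.
  by rewrite size_poly_gt0 -lead_coef_eq0 gt_eqF.
have size_pq : size (p + q) = size p.
  apply/eqP; rewrite eqn_leq (leq_trans (size_polyD _ _)) ?eq_size ?maxnn //=.
  rewrite -eq_size -(prednK size_p_gt0) ltnNge; apply/negP => /leq_sizeP.
  by move=> /(_ _ (leqnn _)) /eqP; rewrite top_coef gt_eqF // addr_gt0.
by rewrite lead_coefE size_pq top_coef addr_gt0.
Qed.

Lemma size_lead_coef_sum_gt0 (I : Type) (r : seq I) (F : I -> {poly R}) (d : nat) :
  (0 < size r)%N -> (forall i, size (F i) = d /\ 0 < lead_coef (F i)) ->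
  size (\sum_(i <- r) F i) = d /\ 0 < lead_coef (\sum_(i <- r) F i).
Proof.
move=> r_gt0 size_lead_F; elim: r r_gt0 => [//|i r IH] _; rewrite big_cons.
case: r IH => [_|j r IH]; first by rewrite big_nil addr0.
have [size_sum lead_sum] := IH isT; have [size_Fi lead_Fi] := size_lead_F i.
by rewrite -size_Fi; apply: size_lead_coefD_gt0; rewrite ?size_sum.
Qed.

End PositiveLeadCoef.

Lemma size_lead_coef_P n : size (P n) = n.+2 /\ 0 < lead_coef (P n).
Proof.
elim/ltn_ind: n => -[_|n IH]; first by rewrite P0 size_polyX lead_coefX.
have IHsub i : (i <= n)%N -> size (P i) = i.+2 /\ 0 < lead_coef (P i).
  by move=> le_in; apply: IH; rewrite ltnS.
have conv (i : 'I_n.+1) :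
    size (P i * P (n - i)) = n.+3 /\ 0 < lead_coef (P i * P (n - i)).
  have le_in : (i <= n)%N by rewrite -ltnS.
  have [size_i lead_i] := IHsub i le_in.
  have [size_ni lead_ni] := IHsub (n - i)%N (leq_subr _ _).
  rewrite lead_coefM mulr_gt0 // size_mul -?lead_coef_eq0 ?gt_eqF //.
  by rewrite size_i size_ni !addSn !addnS subnKC.
have [size_sum lead_sum] :
    size (\sum_(i < n.+1) P i * P (n - i)) = n.+3 /\
    0 < lead_coef (\sum_(i < n.+1) P i * P (n - i)).
  by rewrite -big_enum; apply: size_lead_coef_sum_gt0;
    rewrite // -cardE card_ord.
have size_shift : (size (P n \Po ('X + 1)) < n.+3)%N.
  by rewrite size_comp_poly2 ?size_XaddC // (IHsub n (leqnn n)).1.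
by rewrite PS addrC size_polyDl ?lead_coefDl ?size_sum.
Qed.

Theorem lemma1 : forall n : nat, (size (P n)).-1 = n.+1.
Proof. by move=> n; rewrite (size_lead_coef_P n).1. Qed.
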